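(* For every $p\in[1,\infty)$, the profile of the lamplighter group satisfies $\epsilon_{\mathbb Z\wr\mathbb Z;p}(S)\preceq \dfrac{\log S}{S^{1/3}}$.
   Context: The lamplighter group $\mathbb Z\wr\mathbb Z$ consists of pairs $(f,n)$ with $f\colon\mathbb Z\to\mathbb Z$ finitely supported and $n\in\mathbb Z$, with product $(f,n)(g,n')=(f+g(\cdot-n),n+n')$, equipped with the word metric for generators $(\delta_0,0)$ and $(0,1)$. For a metric space $X$, $\ell^p(X)$ and $\ell^p_1(X)$ are the $p$-summable functions and their unit sphere; for $\xi\colon X\to\ell^p(X)$, $S(\xi)=\sup\{d(x,y):\xi_x(y)\ne0\}$, $\varepsilon(\xi;p)=\sup_{x\ne y}\|\xi_x-\xi_y\|_p/d(x,y)$, and $\epsilon_{X;p}(S)=\inf\{\varepsilon(\xi;p):\xi\colon X\to\ell^p_1(X),\ S(\xi)\le S\}$. For non-negative monotone functions, $g\preceq f$ means there are constants $C,D>0$ with $f(t)\ge Cg(Dt)$ for all sufficiently large $t$. *)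

From HB Require Import structures.
From mathcomp Require Import all_boot all_order all_algebra.
From mathcomp Require Import all_classical all_reals all_analysis.
From mathcomp Require Import zify.
Set Implicit Arguments. Unset Strict Implicit. Unset Printing Implicit Defensive.
Import Order.TTheory GRing.Theory Num.Theory.
Local Open Scope classical_set_scope.
Local Open Scope ring_scope.

Section Profile.
Context {R : realType} {X : choiceType}.

Definition lp_norm (p : R) (u : X -> R) : \bar R :=
  ((\esum_(y in [set: X]) (`|u y| `^ p)%:E) `^ p^-1)%E.

Definition in_lp (p : R) (u : X -> R) : Prop :=
  (\esum_(y in [set: X]) (`|u y| `^ p)%:E < +oo)%E.

Definition in_lp1 (p : R) (u : X -> R) : Prop :=
  in_lp p u /\ lp_norm p u = 1%E.

Definition supp_radius (d : X -> X -> R) (xi : X -> X -> R) : \bar R :=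
  ereal_sup [set e | exists x y, xi x y <> 0 /\ e = (d x y)%:E].

Definition lip_const (d : X -> X -> R) (p : R) (xi : X -> X -> R) : \bar R :=
  ereal_sup [set e | exists x y, x <> y /\
     e = (lp_norm p (fun z => (xi x z - xi y z)%R) * ((d x y)^-1)%:E)%E].

Definition lp_profile (d : X -> X -> R) (p S : R) : \bar R :=
  ereal_inf [set lip_const d p xi | xi in
     [set xi : X -> X -> R | (forall x, in_lp1 p (xi x)) /\
                             (supp_radius d xi <= S%:E)%E]].
End Profile.

Definition fin_supp (f : int -> int) : Prop :=
  exists N : nat, forall k : int, (N < `|k|)%N -> f k = 0.

Record lamp := Lamp { lamp_f : int -> int; lamp_n : int;
                      lamp_fin : fin_supp lamp_f }.

HB.instance Definition _ := gen_eqMixin lamp.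
HB.instance Definition _ := gen_choiceMixin lamp.

Lemma fin_supp_mul (f g : int -> int) (n : int) :
  fin_supp f -> fin_supp g -> fin_supp (fun k => f k + g (k - n)).
Proof.
move=> [N1 H1] [N2 H2]; exists (N1 + N2 + `|n|)%N => k Hk.
rewrite H1 ?H2 ?addr0 //; lia.
Qed.

Lemma fin_supp_inv (f : int -> int) (n : int) :
  fin_supp f -> fin_supp (fun k => - f (k + n)).
Proof.
move=> [N H]; exists (N + `|n|)%N => k Hk.
rewrite H ?oppr0 //; lia.
Qed.

(* (f,n)(g,n') = (f + g(. - n), n + n') *)
Definition lmul (x y : lamp) : lamp :=
  Lamp (lamp_n x + lamp_n y) (fin_supp_mul (lamp_n x) (lamp_fin x) (lamp_fin y)).

(* (f,n)^-1 = (-f(. + n), -n) *)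
Definition linv (x : lamp) : lamp :=
  Lamp (- lamp_n x) (fin_supp_inv (lamp_n x) (lamp_fin x)).

Lemma fin_supp_delta0 : fin_supp (fun k : int => if k == 0 then 1 else 0).
Proof. by exists 0%N => k; case: (k =P 0) => [->|]. Qed.

Lemma fin_supp_0 : fin_supp (fun _ : int => 0).
Proof. by exists 0%N. Qed.

Definition gen_a : lamp := Lamp 0 fin_supp_delta0.
Definition gen_t : lamp := Lamp 1 fin_supp_0.

Definition lamp_gen (s : lamp) : Prop :=
  s = gen_a \/ s = gen_t \/ s = linv gen_a \/ s = linv gen_t.

Definition lamp_dist {R : realType} (x y : lamp) : R :=
  inf [set (size w)%:R | w in [set w : seq lamp |
         (forall s, List.In s w -> lamp_gen s) /\ foldl lmul x w = y]].

From HB Require Import structures.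
From mathcomp Require Import all_boot all_order all_algebra.
From mathcomp Require Import all_classical all_reals all_analysis.
From mathcomp Require Import zify ring lra.
Set Implicit Arguments. Unset Strict Implicit. Unset Printing Implicit Defensive.
Import Order.TTheory GRing.Theory Num.Theory.
Local Open Scope classical_set_scope.
Local Open Scope ring_scope.

(* The witness is [xi x := psi (x^-1 .)] for an l^p-normalised bump [psi] on the lamplighter
   group.  With the tent [T] of height [L] and width [4L], set
   [psi (f, n) = T n * prod_(|i| <= 2L) T (f (n + i))] when every lit lamp is within [2L] of the
   cursor, and [0] otherwise.  A generator changes a single factor, and by at most [1], so
   [||psi - psi (s .)||_p^p <= (4L + 3) V^(4L + 1)] while [||psi||_p^p = V^(4L + 2)], where
   [V = sum_j T j ^ p >= (2L + 1) L^p].  Hence [xi] is [3/L]-Lipschitz along generators, and by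
   Minkowski along words for the whole word metric.  The support of [psi] consists of elements
   spelled by words of length at most [40 L^3], so [L ~ S^(1/3)] gives a profile of order
   [S^(-1/3)], which is even better than [log S / S^(1/3)]. *)

Lemma lamp_ext (x y : lamp) : lamp_f x =1 lamp_f y -> lamp_n x = lamp_n y -> x = y.
Proof.
case: x => f n fs; case: y => g m gs /= /funext efg enm.
subst g m; congr Lamp; exact: Prop_irrelevance.
Qed.

Definition lamp1 : lamp := Lamp 0 fin_supp_0.

Lemma lmulA : associative lmul.
Proof.
move=> x y z; apply: lamp_ext => [k|] /=; last by rewrite addrA.
by rewrite addrA opprD addrA.
Qed.

Lemma lmul1l : left_id lamp1 lmul.
Proof. by move=> x; apply: lamp_ext => [k|] /=; rewrite ?add0r ?subr0. Qed.

Lemma lmul1r : right_id lamp1 lmul.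
Proof. by move=> x; apply: lamp_ext => [k|] /=; rewrite ?addr0. Qed.

Lemma lmulVl x : lmul (linv x) x = lamp1.
Proof. by apply: lamp_ext => [k|] /=; rewrite ?opprK ?addNr. Qed.

Lemma lmulVr x : lmul x (linv x) = lamp1.
Proof. by apply: lamp_ext => [k|] /=; rewrite ?subrK ?addrN. Qed.

Lemma linvK : involutive linv.
Proof. by move=> x; apply: lamp_ext => [k|] /=; rewrite ?opprK ?subrK. Qed.

Lemma lmulKV x y : lmul (linv x) (lmul x y) = y.
Proof. by rewrite lmulA lmulVl lmul1l. Qed.

Lemma lmulK x y : lmul x (lmul (linv x) y) = y.
Proof. by rewrite lmulA lmulVr lmul1l. Qed.

Lemma lmul_bij x : bijective (lmul x).
Proof. by exists (lmul (linv x)) => y; rewrite ?lmulKV ?lmulK. Qed.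

Lemma linvM x y : linv (lmul x y) = lmul (linv y) (linv x).
Proof.
apply: lamp_ext => [k|] /=; last by rewrite opprD addrC.
by rewrite opprD addrC; congr (- _ + - _); congr lamp_f; lia.
Qed.

Lemma foldl_lmul x w : foldl lmul x w = lmul x (foldl lmul lamp1 w).
Proof.
elim: w x => [|s w IH] x /=; first by rewrite lmul1r.
by rewrite IH [in RHS]IH lmul1l lmulA.
Qed.

Definition gen_word (w : seq lamp) : Prop := forall s, List.In s w -> lamp_gen s.

Lemma gen_word_cat w1 w2 : gen_word w1 -> gen_word w2 -> gen_word (w1 ++ w2).
Proof. by move=> g1 g2 s /List.in_app_iff [/g1|/g2]. Qed.

Lemma gen_word_cons s w : lamp_gen s -> gen_word w -> gen_word (s :: w).
Proof. by move=> gs gw x /= [<-|/gw]. Qed.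

Lemma gen_word_rcons w s : gen_word (rcons w s) -> gen_word w /\ lamp_gen s.
Proof.
rewrite -cats1 => g; split => [x xw|]; apply: g; apply/List.in_app_iff; by [left|right; left].
Qed.

Lemma lamp_gen_linv s : lamp_gen s -> lamp_gen (linv s).
Proof. by case=> [->|[->|[->|->]]]; rewrite /lamp_gen ?linvK; tauto. Qed.

Lemma lamp_dist_le_size {R : realType} x w :
  gen_word w -> @lamp_dist R x (foldl lmul x w) <= (size w)%:R.
Proof.
move=> gw; apply: ge_inf; last by exists w.
by exists 0 => _ [v _ <-]; rewrite ler0n.
Qed.

Definition gpow (s : lamp) (j : int) : seq lamp :=
  nseq `|j|%N (if 0 <= j then s else linv s).

Lemma size_gpow s j : size (gpow s j) = `|j|%N.
Proof. exact: size_nseq. Qed.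

Lemma gen_word_gpow s j : lamp_gen s -> gen_word (gpow s j).
Proof.
move=> gs; rewrite /gpow; elim: `|j|%N => [|n IH] //=.
by apply: gen_word_cons => //; case: ifP => _; last exact: lamp_gen_linv.
Qed.

Lemma gpow_t_f x j : lamp_f (foldl lmul x (gpow gen_t j)) =1 lamp_f x.
Proof.
rewrite /gpow; case: ifP => _; elim: `|j|%N x => [|n IH] x k //=;
  rewrite IH /= ?oppr0 ?addr0 //.
Qed.

Lemma gpow_t_n x j : lamp_n (foldl lmul x (gpow gen_t j)) = lamp_n x + j.
Proof.
have step n (s : lamp) e : lamp_n s = e -> lamp_n (foldl lmul x (nseq n s)) = lamp_n x + e *+ n.
  by move=> sn; elim: n x => [|n IH] x /=; rewrite ?addr0 // IH /= sn mulrS; lia.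
by rewrite /gpow; case: ifP => j0; rewrite (step _ _ (if 0 <= j then 1 else -1)) j0 //; lia.
Qed.

Lemma gpow_a_n x j : lamp_n (foldl lmul x (gpow gen_a j)) = lamp_n x.
Proof.
rewrite /gpow; case: ifP => _; elim: `|j|%N x => [|n IH] x //=;
  rewrite IH /= ?oppr0 ?addr0 //.
Qed.

Lemma gpow_a_f x j k : lamp_f (foldl lmul x (gpow gen_a j)) k =
  lamp_f x k + (if k == lamp_n x then j else 0).
Proof.
have step n (s : lamp) e : lamp_n s = 0 -> (forall i, lamp_f s i = if i == 0 then e else 0) ->
   forall y, lamp_f (foldl lmul y (nseq n s)) k =
              lamp_f y k + (if k == lamp_n y then e *+ n else 0).
  move=> sn sf; elim: n => [|n IH] y /=; first by case: ifP; rewrite addr0.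
  rewrite IH /= sf sn addr0 subr_eq0; case: eqP => _; rewrite ?addr0 // mulrS; lia.
have a_f k' : lamp_f gen_a k' = if k' == 0 then 1 else 0 by [].
have aV_f k' : lamp_f (linv gen_a) k' = if k' == 0 then -1 else 0.
  by rewrite /= addr0; case: ifP; rewrite ?oppr0.
rewrite /gpow; case: ifP => j0; [rewrite (step _ _ _ _ a_f) | rewrite (step _ _ _ _ aV_f)] => //.
all: by case: ifP => _; lia.
Qed.

Fixpoint scan_word (N : nat) (start : int) (g : int -> int) : seq lamp :=
  if N is N'.+1 then gpow gen_a (g start) ++ gen_t :: scan_word N' (start + 1) g
  else [::].

Lemma scan_word_spec N start g x : lamp_n x = start ->
  lamp_n (foldl lmul x (scan_word N start g)) = start + N%:Z /\
  forall k, lamp_f (foldl lmul x (scan_word N start g)) k =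
    lamp_f x k + (if (start <= k) && (k < start + N%:Z) then g k else 0).
Proof.
elim: N start x => [|N IH] start x xn /=.
  by split; [rewrite addr0 | move=> k; case: ifP; rewrite ?addr0 //; lia].
rewrite foldl_cat /=; set y := lmul _ gen_t.
have yn : lamp_n y = start + 1 by rewrite /y /= gpow_a_n xn.
have [IH1 IH2] := IH (start + 1) y yn.
split; first by rewrite IH1; lia.
move=> k; rewrite IH2 /y /= addr0 gpow_a_f xn -addrA; congr (_ + _).
by case: eqP => [->|kn]; case: ifP; case: ifP; try lia; move=> *; rewrite ?addr0 ?add0r.
Qed.

Lemma gen_word_scan N start g : gen_word (scan_word N start g).
Proof.
elim: N start => [|N IH] start //=.
apply: gen_word_cat; first exact/gen_word_gpow/or_introl.
by apply: gen_word_cons => //; right; left.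
Qed.

Lemma size_scan_word N start g B : (forall k, (`|g k| <= B)%N) ->
  (size (scan_word N start g) <= N * B.+1)%N.
Proof.
move=> gB; elim: N start => [|N IH] start //=.
by rewrite size_cat size_gpow /= mulSn; have := IH (start + 1); have := gB start; lia.
Qed.

Definition spell (M : nat) (w : lamp) : seq lamp :=
  gpow gen_t (- M%:Z) ++ scan_word M.*2.+1 (- M%:Z) (lamp_f w) ++
  gpow gen_t (lamp_n w - M%:Z - 1).

Lemma gen_word_spell M w : gen_word (spell M w).
Proof.
have gt : lamp_gen gen_t by right; left.
apply: gen_word_cat; [exact: gen_word_gpow|apply: gen_word_cat];
  [exact: gen_word_scan|exact: gen_word_gpow].
Qed.

Lemma spellK M w : (forall k, (M < `|k|)%N -> lamp_f w k = 0) ->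
  foldl lmul lamp1 (spell M w) = w.
Proof.
move=> wsupp; rewrite /spell 2!foldl_cat.
set x := foldl lmul lamp1 (gpow _ _).
have xn : lamp_n x = - M%:Z by rewrite /x gpow_t_n /= add0r.
have [scan_n scan_f] := scan_word_spec M.*2.+1 (lamp_f w) xn.
apply: lamp_ext => [k|]; last by rewrite gpow_t_n scan_n; lia.
rewrite gpow_t_f scan_f /x gpow_t_f /= add0r; case: ifP => // Hk.
by rewrite wsupp //; lia.
Qed.

Lemma size_spell M w B : (forall k, (`|lamp_f w k| <= B)%N) -> (`|lamp_n w| <= M)%N ->
  (size (spell M w) <= M + M.*2.+1 * B.+1 + M.*2.+1)%N.
Proof.
move=> wB wM; have := size_scan_word M.*2.+1 (- M%:Z) wB.
by rewrite /spell !size_cat !size_gpow; lia.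
Qed.

Lemma gen_word_exists x y : exists w, gen_word w /\ foldl lmul x w = y.
Proof.
have [M HM] := lamp_fin (lmul (linv x) y).
exists (spell M (lmul (linv x) y)); split; first exact: gen_word_spell.
by rewrite foldl_lmul spellK // lmulK.
Qed.

Section PowR.
Context {R : realType} (p : R) (p0 : 0 < p).

Lemma powR_prod (I : Type) (r : seq I) (P : pred I) (F : I -> R) :
  (forall i, 0 <= F i) ->
  (\prod_(i <- r | P i) F i) `^ p = \prod_(i <- r | P i) F i `^ p.
Proof.
move=> F0; elim: r => [|i r IH]; first by rewrite !big_nil powR1.
by rewrite !big_cons; case: ifP => // _; rewrite powRM ?IH // prodr_ge0.
Qed.

Lemma powR_le1 (x : R) : 0 <= x <= 1 -> x `^ p <= 1.
Proof.
move=> /andP[x0 x1]; have <- : 1 `^ p = 1 :> R by rewrite powR1.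
by apply: ge0_ler_powR => //; [exact: ltW|rewrite nnegrE].
Qed.

Lemma powRV (x : R) : 0 <= x -> x^-1 `^ p = (x `^ p)^-1.
Proof.
rewrite le_eqVlt => /predU1P[<-|x0]; first by rewrite invr0 powR0 ?invr0 // gt_eqF.
by rewrite -powR_inv1 ?(ltW x0) // -powRrM mulN1r powRN.
Qed.

End PowR.

Section Esum.
Local Open Scope ereal_scope.
Context {R : realType} {T : choiceType}.

Lemma esumZl (I : set T) (c : R) (a : T -> \bar R) :
  (0 <= c)%R -> (forall i, I i -> 0 <= a i) ->
  \esum_(i in I) (c%:E * a i) = c%:E * \esum_(i in I) a i.
Proof.
move=> c0 a0; rewrite /esum -ereal_supZl //; last first.
  by apply/set0P; exists 0; exists set0; [exact: fsets_set0|rewrite fsbig_set0].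
have E X : fsets I X -> \sum_(x \in X) (c%:E * a x) = c%:E * \sum_(x \in X) a x.
  move=> [finX XI]; rewrite !fsbig_finite //= big_seq [in RHS]big_seq.
  by rewrite ge0_sume_distrr // => i; rewrite in_fset_set // inE => /XI /a0.
congr ereal_sup; apply/seteqP; split => y.
  by move=> [X XI <-]; exists (\sum_(x \in X) a x); [exists X|rewrite E].
by move=> [z [X XI <-] <-]; exists X => //; rewrite E.
Qed.

Lemma esum_bij (f : T -> T) (a : T -> \bar R) : bijective f ->
  \esum_(z in [set: T]) a z = \esum_(w in [set: T]) a (f w).
Proof.
move=> [g fK gK]; apply: reindex_esum; split => // [x y _ _ /(can_inj fK)//|y _].
by exists (g y); rewrite ?gK.
Qed.

Lemma esum_fin_supp (B : finType) (enc : B -> T) (F : T -> R) :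
  injective enc -> (forall w, F w <> 0%R -> exists b, enc b = w) ->
  (forall w, (0 <= F w)%R) ->
  \esum_(w in [set: T]) (F w)%:E = (\sum_(b : B) F (enc b))%:E.
Proof.
move=> encI Fsupp F0.
rewrite (esumID (range enc)); last by move=> w _; rewrite lee_fin.
rewrite [X in _ + X]esum1 ?adde0; last first.
  move=> w [_ /= nw]; congr EFin; apply: contra_notP nw => /Fsupp [b <-].
  by exists b.
rewrite setTI esum_image; last by move=> u v _ _ /encI.
rewrite esum_fset; [|exact: finite_finset|by move=> b _; rewrite lee_fin].
rewrite fsumEFin; last exact: finite_finset.
congr EFin; rewrite (fsbigE (enum B)) ?enum_uniq //; last by move=> i _; rewrite mem_enum.
by rewrite big_enum_cond /=; apply: eq_bigl => b; rewrite in_setT.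
Qed.

End Esum.

Section Minkowski.
Context {R : realType} {T : choiceType} (p : R) (hp : 1 <= p).
Local Notation lp_sum u := (\esum_(z in [set: T]) (`|u z| `^ p)%:E)%E.

Let p0 : 0 < p. Proof. exact: lt_le_trans hp. Qed.

Lemma powR_convex (t x y : R) : 0 <= t -> t <= 1 -> 0 <= x -> 0 <= y ->
  (t * x + (1 - t) * y) `^ p <= t * x `^ p + (1 - t) * y `^ p.
Proof.
move=> t0 t1 x0 y0; have := @convex_powR R p hp (Itv01 t0 t1) x y.
by rewrite !inE /= !in_itv /= !andbT => /(_ x0 y0); rewrite !convRE.
Qed.

(* Convexity with weights [a / (a + b)] and [b / (a + b)],
   applied to [|A| (a + b) / a] and [|B| (a + b) / b]. *)
Lemma powR_normD_le (A B a b : R) : 0 < a -> 0 < b ->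
  `|A + B| `^ p <= (a + b) `^ p / a `^ p * (a / (a + b)) * `|A| `^ p +
                   (a + b) `^ p / b `^ p * (b / (a + b)) * `|B| `^ p.
Proof.
move=> a0 b0; have ab0 : 0 < a + b by exact: addr_gt0.
have a0' := ltW a0; have b0' := ltW b0; have ab0' := ltW ab0.
have t0 : 0 <= a / (a + b) by rewrite divr_ge0.
have t1 : a / (a + b) <= 1 by rewrite ler_pdivrMr // mul1r lerDl.
have t1E : 1 - a / (a + b) = b / (a + b) by field; rewrite gt_eqF.
apply: le_trans (_ : (`|A| + `|B|) `^ p <= _).
  by apply: ge0_ler_powR; rewrite ?nnegrE ?addr_ge0 ?ler_normD //; exact: ltW.
have -> : `|A| + `|B| = a / (a + b) * (`|A| * ((a + b) / a)) +
                       (1 - a / (a + b)) * (`|B| * ((a + b) / b)).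
  by rewrite t1E; field; rewrite !gt_eqF.
apply: le_trans (powR_convex t0 t1 _ _) _; rewrite ?mulr_ge0 ?divr_ge0 ?invr_ge0 //.
rewrite t1E !powRM ?divr_ge0 ?invr_ge0 // !(powRV p0) //.
by rewrite le_eqVlt; apply/orP; left; apply/eqP; ring.
Qed.

Lemma lp_sum_normD (F G : T -> R) (a b : R) : 0 < a -> 0 < b ->
  (lp_sum F <= (a `^ p)%:E)%E -> (lp_sum G <= (b `^ p)%:E)%E ->
  (lp_sum (fun z => F z + G z) <= ((a + b) `^ p)%:E)%E.
Proof.
move=> a0 b0 HF HG.
set c1 := (a + b) `^ p / a `^ p * (a / (a + b)).
set c2 := (a + b) `^ p / b `^ p * (b / (a + b)).
have c10 : 0 <= c1 by rewrite /c1 !mulr_ge0 ?invr_ge0 ?powR_ge0 ?divr_ge0 ?addr_ge0 ?ltW.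
have c20 : 0 <= c2 by rewrite /c2 !mulr_ge0 ?invr_ge0 ?powR_ge0 ?divr_ge0 ?addr_ge0 ?ltW.
apply: (@le_trans _ _ (\esum_(z in [set: T])
   (c1%:E * (`|F z| `^ p)%:E + c2%:E * (`|G z| `^ p)%:E))%E).
  by apply: le_esum => z _; rewrite -!EFinM -EFinD lee_fin; exact: powR_normD_le.
rewrite esumD; try by move=> z _; rewrite -EFinM lee_fin mulr_ge0 ?powR_ge0.
rewrite !esumZl //; try by move=> z _; rewrite lee_fin powR_ge0.
apply: le_trans (leeD (lee_wpmul2l _ HF) (lee_wpmul2l _ HG)) _; rewrite ?lee_fin //.
rewrite /c1 /c2.
have ap : 0 < a `^ p by exact: powR_gt0.
have bp : 0 < b `^ p by exact: powR_gt0.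
by rewrite le_eqVlt; apply/orP; left; apply/eqP; field; rewrite !gt_eqF ?addr_gt0.
Qed.

Lemma lp_norm_le (u : T -> R) (c : R) : 0 <= c ->
  (lp_sum u <= (c `^ p)%:E)%E -> (lp_norm p u <= c%:E)%E.
Proof.
move=> c0; rewrite /lp_norm.
have : (0 <= lp_sum u)%E by apply: esum_ge0 => z _; rewrite lee_fin powR_ge0.
case: (lp_sum u) => [e| |] //= e0 he; move: e0 he; rewrite !lee_fin => e0 he.
have pV : p * p^-1 = 1 by rewrite mulfV ?gt_eqF.
rewrite -[leRHS](powRr1 c0) -pV powRrM.
by apply: ge0_ler_powR; rewrite ?nnegrE ?invr_ge0 ?powR_ge0 //; exact: ltW.
Qed.

End Minkowski.


Definition t_move (s : lamp) (e : int) : Prop :=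
  [/\ `|e|%N = 1%N, lamp_n s = e & lamp_f s =1 fun=> 0].

Definition a_move (s : lamp) (e : int) : Prop :=
  [/\ `|e|%N = 1%N, lamp_n s = 0 & forall k, lamp_f s k = if k == 0 then e else 0].

Definition unit_move (s : lamp) : Prop := (exists e, t_move s e) \/ (exists e, a_move s e).

Lemma lamp_gen_unit_move s : lamp_gen s -> unit_move s.
Proof.
case=> [->|[->|[->|->]]].
- by right; exists 1; split.
- by left; exists 1; split.
- right; exists (-1); split; [by []|by rewrite /= oppr0|].
  by move=> k /=; rewrite addr0; case: ifP; rewrite ?oppr0.
- by left; exists (-1); split; [by []|by []|move=> k /=; rewrite oppr0].
Qed.

Section Bump.
Context {R : realType} (L : nat).

(* Truncated subtraction makes the tent vanish outside [(-2L, 2L)]. *)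
Definition tentn (j : int) : nat := if (`|j| <= L)%N then L else (L.*2 - `|j|)%N.
Definition tent (j : int) : R := (tentn j)%:R.

Lemma tentn_lipschitz j e : (`|e| = 1)%N ->
  (tentn j <= tentn (j + e) + 1)%N /\ (tentn (j + e) <= tentn j + 1)%N.
Proof. by move=> e1; rewrite /tentn; case: ifP; case: ifP; lia. Qed.

Lemma tentn_eq0 j : (0 < L)%N -> (L.*2 <= `|j|)%N -> tentn j = 0%N.
Proof. by move=> L0 Hj; rewrite /tentn; case: ifP; lia. Qed.

Lemma tentn_neq0 j : tentn j <> 0%N -> (`|j| < L.*2)%N.
Proof. by rewrite /tentn; case: ifP; lia. Qed.

Lemma tent_ge0 j : 0 <= tent j. Proof. exact: ler0n. Qed.

Lemma tent_lipschitz j e : (`|e| = 1)%N -> `|tent j - tent (j + e)| <= 1.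
Proof.
move=> /(tentn_lipschitz j) [H1 H2]; rewrite /tent ler_norml.
have H1' : (tentn j)%:R <= (tentn (j + e))%:R + 1 :> R by rewrite natr1 ler_nat -addn1.
have H2' : (tentn (j + e))%:R <= (tentn j)%:R + 1 :> R by rewrite natr1 ler_nat -addn1.
by apply/andP; split; lra.
Qed.

(* A configuration: the cursor position and the lamps in the window [cursor - 2L, cursor + 2L],
   all with values in [-2L-1, 2L+1]. *)
Definition nwin := (4 * L).+1.
Definition nval := (4 * L).+3.
Definition zval (v : 'I_nval) : int := v%:Z - (L.*2.+1)%:Z.
Definition cfg := ('I_nval * {ffun 'I_nwin -> 'I_nval})%type.

Definition cfg_f (m : int) (h : 'I_nwin -> int) (k : int) : int :=
  let j := k - m + (L.*2)%:Z in
  if (0 <= j) && (j < nwin%:Z) then h (inord `|j|) else 0.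

Lemma fin_supp_cfg_f m h : fin_supp (cfg_f m h).
Proof.
by exists (`|m| + L.*2 + nwin)%N => k Hk; rewrite /cfg_f; case: ifP => //; rewrite /nwin; lia.
Qed.

Definition lamp_of_cfg (b : cfg) : lamp :=
  Lamp (zval b.1) (fin_supp_cfg_f (zval b.1) (fun i => zval (b.2 i))).

Lemma lamp_of_cfg_inj : injective lamp_of_cfg.
Proof.
move=> [m1 h1] [m2 h2] E.
have m12 : m1 = m2 by apply: val_inj; have := congr1 lamp_n E; rewrite /= /zval; lia.
subst m2; congr pair; apply/ffunP => i.
have := congr1 (fun w => lamp_f w (zval m1 - (L.*2)%:Z + i%:Z)) E; rewrite /= /cfg_f.
have -> : zval m1 - (L.*2)%:Z + i%:Z - zval m1 + (L.*2)%:Z = i%:Z by lia.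
have -> : (0 <= i%:Z) && (i%:Z < nwin%:Z) by have := ltn_ord i; lia.
by rewrite absz_nat inord_val /zval => Ei; apply: val_inj => /=; lia.
Qed.

Definition bump (w : lamp) : R :=
  if `[< forall k, lamp_f w k <> 0 -> (`|k - lamp_n w| <= L.*2)%N >] then
    tent (lamp_n w) * \prod_(i < nwin) tent (lamp_f w (lamp_n w - (L.*2)%:Z + i%:Z))
  else 0.

Lemma bump_ge0 w : 0 <= bump w.
Proof.
rewrite /bump; case: ifP => // _.
by rewrite mulr_ge0 ?tent_ge0 // prodr_ge0 // => i _; exact: tent_ge0.
Qed.

Lemma bump_cfg_f w m h : lamp_n w = m -> lamp_f w =1 cfg_f m h ->
  bump w = tent m * \prod_(i < nwin) tent (h i).
Proof.
move=> wn wf; rewrite /bump asboolT; last first.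
  by move=> k; rewrite wf wn /cfg_f; case: ifP => //; rewrite /nwin; lia.
rewrite wn; congr (_ * _); apply: eq_bigr => i _; rewrite wf /cfg_f.
have -> : m - (L.*2)%:Z + i%:Z - m + (L.*2)%:Z = i%:Z by lia.
by rewrite absz_nat inord_val; case: ifP => //; have := ltn_ord i; lia.
Qed.

Lemma bump_cfg b : bump (lamp_of_cfg b) = tent (zval b.1) * \prod_(i < nwin) tent (zval (b.2 i)).
Proof. exact: bump_cfg_f. Qed.

Lemma bump_t_move s e b : t_move s e ->
  bump (lmul s (lamp_of_cfg b)) = tent (zval b.1 + e) * \prod_(i < nwin) tent (zval (b.2 i)).
Proof.
case=> _ sn sf; apply: bump_cfg_f => [|k] /=; first by rewrite sn addrC.
rewrite sf add0r /cfg_f sn.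
by have -> : k - e - zval b.1 + (L.*2)%:Z = k - (zval b.1 + e) + (L.*2)%:Z by lia.
Qed.

Lemma bump_a_move s e b : (0 < L)%N -> a_move s e ->
  bump (lmul s (lamp_of_cfg b)) = tent (zval b.1) *
    \prod_(i < nwin) tent (zval (b.2 i) + (if i%:Z == (L.*2)%:Z - zval b.1 then e else 0)).
Proof.
move=> L0 [_ sn sf].
have [mL|mL] := leqP `|zval b.1| L.*2; last first.
  rewrite /tent tentn_eq0 ?mul0r /bump /= ?sn ?add0r; try lia.
  by case: ifP => // _; rewrite /tent tentn_eq0 ?mul0r //; lia.
apply: bump_cfg_f => [|k] /=; first by rewrite sn add0r.
rewrite sf sn subr0 /cfg_f.
case Hk: (_ && _).
  rewrite inordK; last by move: Hk; rewrite /nwin; lia.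
  have -> : ((absz (k - zval b.1 + (L.*2)%:Z))%:Z == (L.*2)%:Z - zval b.1) = (k == 0).
    by move: Hk; rewrite /nwin => Hk; apply/eqP/eqP; lia.
  by rewrite addrC.
case: eqP => [k0|]; rewrite ?addr0 //.
have H : (0 <= 0 - zval b.1 + (L.*2)%:Z) && (0 - zval b.1 + (L.*2)%:Z < nwin%:Z).
  by move: mL; rewrite /zval /nwin; lia.
by move: Hk; rewrite k0 H.
Qed.

(* [core] contains the support of [bump], and [cfg_range] contains [core] together with its
   neighbours in the Cayley graph; [cfg_range] is covered by [lamp_of_cfg]. *)
Definition core (u : lamp) : Prop :=
  [/\ (`|lamp_n u| < L.*2)%N,
      (forall k, lamp_f u k <> 0 -> (`|k - lamp_n u| <= L.*2)%N) &
      (forall k, (`|k - lamp_n u| <= L.*2)%N -> (`|lamp_f u k| < L.*2)%N)].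

Definition cfg_range (u : lamp) : Prop :=
  [/\ (`|lamp_n u| <= L.*2.+1)%N,
      (forall k, lamp_f u k <> 0 -> (`|k - lamp_n u| <= L.*2)%N) &
      (forall k, (`|lamp_f u k| <= L.*2.+1)%N)].

Lemma bump_neq0_core u : bump u <> 0 -> core u.
Proof.
rewrite /bump; case: ifP => [/asboolP supp|_]; last by [].
move=> /eqP; rewrite mulf_eq0 negb_or => /andP[Tn0 /prodf_neq0 Hp].
have Tn0' : tentn (lamp_n u) <> 0%N by move=> E; move: Tn0; rewrite /tent E eqxx.
split; [exact: tentn_neq0|exact: supp|move=> k kw].
pose i : 'I_nwin := inord `|k - lamp_n u + (L.*2)%:Z|.
have iv : (i : nat)%:Z = k - lamp_n u + (L.*2)%:Z by rewrite /i inordK /nwin; lia.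
have := Hp i isT; rewrite /tent pnatr_eq0.
have -> : lamp_n u - (L.*2)%:Z + (i : nat)%:Z = k by lia.
by move=> /eqP /tentn_neq0.
Qed.

Lemma core_cfg_range u : core u -> cfg_range u.
Proof.
case=> H1 H2 H3; split => // [|k]; first lia.
case: (leqP `|k - lamp_n u| L.*2) => Hk; first by have := H3 _ Hk; lia.
by case: (eqVneq (lamp_f u k) 0) => [->//|fk]; have := H2 k (elimN eqP fk); lia.
Qed.

Lemma core_t_move s e w : t_move s e -> core (lmul s w) -> cfg_range w.
Proof.
move=> [e1 sn sf] [/= H1 H2 H3]; rewrite sn in H1 H2 H3.
split; first lia.
  by move=> k fk; have := H2 (k + e); rewrite sf add0r addrK => /(_ fk); lia.
move=> k; case: (leqP `|k - lamp_n w| L.*2) => Hk.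
  by have := H3 (k + e); rewrite sf add0r addrK; lia.
have := H2 (k + e); rewrite sf add0r addrK.
by case: (eqVneq (lamp_f w k) 0) => [->//|fk /(_ (elimN eqP fk))]; lia.
Qed.

Lemma core_a_move s e w : a_move s e -> core (lmul s w) -> cfg_range w.
Proof.
move=> [e1 sn sf] [/= H1 H2 H3]; rewrite sn add0r in H1 H2 H3.
split; first lia.
  move=> k fk; case: (eqVneq k 0) => [->|k0]; first lia.
  by apply: H2; rewrite sf subr0 (negbTE k0) add0r.
move=> k; case: (leqP `|k - lamp_n w| L.*2) => Hk.
  by have := H3 k Hk; rewrite sf subr0; case: ifP; lia.
have k0 : k != 0 by apply/eqP => k0; move: Hk; rewrite k0; lia.
have := H2 k; rewrite sf subr0 (negbTE k0) add0r.
by case: (eqVneq (lamp_f w k) 0) => [->//|fk /(_ (elimN eqP fk))]; lia.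
Qed.

Lemma cfg_range_lamp_of_cfg w : cfg_range w -> exists b, lamp_of_cfg b = w.
Proof.
have zval_inord (j : int) : (`|j| <= L.*2.+1)%N ->
    zval (inord (absz (j + (L.*2.+1)%:Z)) : 'I_nval) = j.
  by move=> jL; rewrite /zval inordK /nval; lia.
case=> H1 H2 H3.
exists (inord (absz (lamp_n w + (L.*2.+1)%:Z)),
        [ffun i : 'I_nwin => inord (absz (lamp_f w (lamp_n w - (L.*2)%:Z + i%:Z) + (L.*2.+1)%:Z))]).
apply: lamp_ext => [k|] /=; last exact: zval_inord.
rewrite /cfg_f zval_inord //.
case Hk: (_ && _).
  move: Hk => /andP[Hk1 Hk2]; rewrite /nwin in Hk2.
  rewrite ffunE zval_inord // inordK; last by rewrite /nwin; lia.
  by congr (lamp_f w _); lia.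
case: (eqVneq (lamp_f w k) 0) => [->//|fk]; have := H2 k (elimN eqP fk).
by move: Hk; rewrite /nwin => /negbT; rewrite negb_and => /orP[]; lia.
Qed.

Lemma bump_move_cfg_range s w : unit_move s ->
  bump w <> 0 \/ bump (lmul s w) <> 0 -> cfg_range w.
Proof.
move=> [[e se]|[e se]] [/bump_neq0_core|/bump_neq0_core]; try exact: core_cfg_range.
  exact: core_t_move se.
exact: core_a_move se.
Qed.

End Bump.

Section BumpMass.
Context {R : realType} (L : nat) (p : R) (L0 : (0 < L)%N) (hp : 1 <= p).

Let p0 : 0 < p. Proof. exact: lt_le_trans hp. Qed.

Local Notation tent := (@tent R L).
Local Notation nwin := (nwin L).
Local Notation nval := (nval L).
Local Notation zval := (@zval L).
Local Notation bump := (@bump R L).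

Definition tent_mass : R := \sum_(v : 'I_nval) tent (zval v) `^ p.

Lemma tent_mass_ge0 : 0 <= tent_mass.
Proof. by apply: sumr_ge0 => v _; exact: powR_ge0. Qed.

(* The [2L + 1] values of [-L .. L] already carry mass [L ^ p] each. *)
Lemma tent_mass_lb : (L.*2.+1)%:R * L%:R `^ p <= tent_mass.
Proof.
rewrite /tent_mass -(big_mkord xpredT (fun v => tent (v%:Z - (L.*2.+1)%:Z) `^ p)).
rewrite (@big_cat_nat _ _ _ L.+1) //=; last by rewrite /nval; lia.
rewrite (@big_cat_nat _ _ _ (L.*2 + L).+2 L.+1) //=; try by rewrite /nval; lia.
have -> : \sum_(L.+1 <= i < (L.*2 + L).+2) tent (i%:Z - (L.*2.+1)%:Z) `^ p =
          \sum_(L.+1 <= i < (L.*2 + L).+2) (L%:R `^ p : R).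
  by apply: eq_big_nat => i /andP[i1 i2]; rewrite /tent /tentn; case: ifP => //; lia.
rewrite sumr_const_nat -mulr_natl.
have -> : ((L.*2 + L).+2 - L.+1)%N = L.*2.+1 by lia.
set lo := \sum_(0 <= i < L.+1) _; set hi := \sum_(_ <= i < nval) _.
have lo0 : 0 <= lo by apply: sumr_ge0 => *; exact: powR_ge0.
have hi0 : 0 <= hi by apply: sumr_ge0 => *; exact: powR_ge0.
lra.
Qed.

Lemma tent_mass_gt0 : 0 < tent_mass.
Proof.
by apply: lt_le_trans tent_mass_lb; rewrite mulr_gt0 ?ltr0n // powR_gt0 ?ltr0n.
Qed.

Lemma sum_tent_diff e : (`|e| = 1)%N ->
  \sum_(m : 'I_nval) `|tent (zval m) - tent (zval m + e)| `^ p <= nval%:R.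
Proof.
move=> e1; apply: le_trans (_ : \sum_(m : 'I_nval) (1 : R) <= _).
  by apply: ler_sum => m _; apply: powR_le1 => //; rewrite normr_ge0 tent_lipschitz.
by rewrite sumr_const card_ord.
Qed.

Lemma sum_prod_tent (G : 'I_nwin -> 'I_nval -> R) :
  \sum_(h : {ffun 'I_nwin -> 'I_nval}) \prod_i G i (h i) = \prod_i \sum_(v : 'I_nval) G i v.
Proof. by rewrite bigA_distr_bigA. Qed.

Lemma sum_bump_cfg : \sum_(b : cfg L) bump (lamp_of_cfg b) `^ p = tent_mass * tent_mass ^+ nwin.
Proof.
under eq_bigr => b _ do
  rewrite bump_cfg powRM ?tent_ge0 ?prodr_ge0 ?powR_prod // => *; try exact: tent_ge0.
rewrite -(pair_bigA _ (fun m (h : {ffun 'I_nwin -> 'I_nval}) =>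
  tent (zval m) `^ p * \prod_i tent (zval (h i)) `^ p)) /=.
under eq_bigr => m _ do
  rewrite -mulr_sumr (sum_prod_tent (fun _ v => tent (zval v) `^ p)) prodr_const card_ord.
by rewrite -mulr_suml.
Qed.

Lemma sum_bump_t_move s e : t_move s e ->
  \sum_(b : cfg L) `|bump (lamp_of_cfg b) - bump (lmul s (lamp_of_cfg b))| `^ p
    <= nval%:R * tent_mass ^+ nwin.
Proof.
move=> se; have e1 : (`|e| = 1)%N by case: se.
have Pg (h : {ffun 'I_nwin -> 'I_nval}) : 0 <= \prod_i tent (zval (h i)).
  by apply: prodr_ge0 => *; exact: tent_ge0.
under eq_bigr => b _ do rewrite bump_cfg (bump_t_move _ se) -mulrBl normrM
  (ger0_norm (Pg _)) powRM ?normr_ge0 ?Pg // powR_prod //; try exact: tent_ge0.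
rewrite -(pair_bigA _ (fun m (h : {ffun 'I_nwin -> 'I_nval}) =>
  `|tent (zval m) - tent (zval m + e)| `^ p * \prod_i tent (zval (h i)) `^ p)) /=.
under eq_bigr => m _ do rewrite -mulr_sumr (sum_prod_tent (fun _ v => tent (zval v) `^ p))
  prodr_const card_ord.
by rewrite -mulr_suml ler_wpM2r ?exprn_ge0 ?tent_mass_ge0 ?sum_tent_diff.
Qed.

(* Only the lamp at the cursor changes, i.e. the factor of index [2L - cursor]. *)
Lemma sum_prod_tent_a_move (m : 'I_nval) e : (`|e| = 1)%N -> (`|zval m| <= L.*2)%N ->
  \sum_(h : {ffun 'I_nwin -> 'I_nval})
    `|\prod_i tent (zval (h i)) -
      \prod_i tent (zval (h i) + (if i%:Z == (L.*2)%:Z - zval m then e else 0))| `^ p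
  <= nval%:R * tent_mass ^+ (4 * L).
Proof.
move=> e1 mL; have Tg j : 0 <= tent j by exact: tent_ge0.
pose i0 : 'I_nwin := inord `|(L.*2)%:Z - zval m|.
have i0v : (i0 : nat)%:Z = (L.*2)%:Z - zval m by rewrite /i0 inordK; rewrite /nwin; lia.
pose G i (v : 'I_nval) :=
  if i == i0 then `|tent (zval v) - tent (zval v + e)| `^ p else tent (zval v) `^ p.
have E (h : {ffun 'I_nwin -> 'I_nval}) :
  `|\prod_i tent (zval (h i)) -
    \prod_i tent (zval (h i) + (if i%:Z == (L.*2)%:Z - zval m then e else 0))| `^ p
  = \prod_i G i (h i).
  rewrite (bigD1 i0) //= [X in _ - X](bigD1 i0) //= i0v eqxx.
  have -> : \prod_(i < nwin | i != i0)
      tent (zval (h i) + (if i%:Z == (L.*2)%:Z - zval m then e else 0)) =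
      \prod_(i < nwin | i != i0) tent (zval (h i)).
    apply: eq_bigr => i ii0; case: eqP => [iv|]; last by rewrite addr0.
    have ii : i = i0 by apply: val_inj => /=; lia.
    by rewrite ii eqxx in ii0.
  have Pg : 0 <= \prod_(i < nwin | i != i0) tent (zval (h i)) by apply: prodr_ge0.
  rewrite -mulrBl normrM (ger0_norm Pg) powRM ?normr_ge0 // powR_prod //.
  rewrite [RHS](bigD1 i0) //= /G eqxx; congr (_ * _).
  by apply: eq_bigr => i ii0; rewrite (negbTE ii0).
under eq_bigr => h _ do rewrite E.
rewrite sum_prod_tent (bigD1 i0) //=.
have -> : \prod_(i < nwin | i != i0) \sum_v G i v = tent_mass ^+ (4 * L).
  rewrite (eq_bigr (fun=> tent_mass)) ?prodr_const ?cardC1 ?card_ord //.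
  by move=> i ii0; apply: eq_bigr => v _; rewrite /G (negbTE ii0).
rewrite ler_wpM2r ?exprn_ge0 ?tent_mass_ge0 //.
by under eq_bigr => v _ do rewrite /G eqxx; exact: sum_tent_diff.
Qed.

Lemma sum_bump_a_move s e : a_move s e ->
  \sum_(b : cfg L) `|bump (lamp_of_cfg b) - bump (lmul s (lamp_of_cfg b))| `^ p
    <= nval%:R * tent_mass ^+ nwin.
Proof.
move=> se; have e1 : (`|e| = 1)%N by case: se.
have Tg j : 0 <= tent j by exact: tent_ge0.
under eq_bigr => b _ do rewrite bump_cfg (bump_a_move _ L0 se) -mulrBr normrM
  (ger0_norm (Tg _)) powRM ?normr_ge0 ?Tg //.
rewrite -(pair_bigA _ (fun m (h : {ffun 'I_nwin -> 'I_nval}) =>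
  tent (zval m) `^ p * `|\prod_i tent (zval (h i)) -
      \prod_i tent (zval (h i) + (if i%:Z == (L.*2)%:Z - zval m then e else 0))| `^ p)) /=.
under eq_bigr => m _ do rewrite -mulr_sumr.
apply: le_trans (_ : \sum_(m : 'I_nval) tent (zval m) `^ p * (nval%:R * tent_mass ^+ (4 * L)) <= _).
  apply: ler_sum => m _; have [mL|mL] := leqP `|zval m| L.*2.
    by apply: ler_wpM2l; [exact: powR_ge0|exact: sum_prod_tent_a_move].
  by rewrite /tent tentn_eq0 // ?powR0 ?mul0r ?gt_eqF //; lia.
by rewrite -mulr_suml -/tent_mass mulrCA -exprS.
Qed.

Definition bump_scale : R := (tent_mass * tent_mass ^+ nwin) `^ (- p^-1).

Definition nbump (w : lamp) : R := bump_scale * bump w.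

Lemma bump_scale_ge0 : 0 <= bump_scale. Proof. exact: powR_ge0. Qed.

Lemma bump_scale_powR : bump_scale `^ p = (tent_mass * tent_mass ^+ nwin)^-1.
Proof.
rewrite /bump_scale -powRrM mulNr mulVf ?gt_eqF // powR_inv1 //.
by rewrite mulr_ge0 ?exprn_ge0 ?tent_mass_ge0.
Qed.

Lemma sum_nbump_cfg : \sum_(b : cfg L) nbump (lamp_of_cfg b) `^ p = 1.
Proof.
under eq_bigr => b _ do rewrite /nbump powRM ?bump_scale_ge0 ?bump_ge0 // bump_scale_powR.
by rewrite -mulr_sumr sum_bump_cfg mulVf // gt_eqF // mulr_gt0 ?exprn_gt0 ?tent_mass_gt0.
Qed.

Lemma nval_div_tent_mass_le : nval%:R / tent_mass <= (3 / L%:R) `^ p.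
Proof.
rewrite ler_pdivrMr ?tent_mass_gt0 //.
apply: le_trans (ler_wpM2l (powR_ge0 _ _) tent_mass_lb).
rewrite powRM ?invr_ge0 ?ler0n // (powRV p0) ?ler0n //.
have Lp : 0 < L%:R `^ p :> R by apply: powR_gt0; rewrite ltr0n.
have -> : 3 `^ p * (L%:R `^ p)^-1 * ((L.*2.+1)%:R * L%:R `^ p) = 3 `^ p * (L.*2.+1)%:R :> R.
  by field; rewrite gt_eqF.
have h3 : 3 <= 3 `^ p :> R by apply: le1r_powR => //; lra.
apply: le_trans (_ : 3 * (L.*2.+1)%:R <= _); last by rewrite ler_wpM2r.
by rewrite -natrM ler_nat /nval; lia.
Qed.

Lemma sum_nbump_move s : unit_move s ->
  \sum_(b : cfg L) `|nbump (lamp_of_cfg b) - nbump (lmul s (lamp_of_cfg b))| `^ p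
    <= (3 / L%:R) `^ p.
Proof.
move=> sm; apply: le_trans nval_div_tent_mass_le.
under eq_bigr => b _ do rewrite /nbump -mulrBr normrM (ger0_norm bump_scale_ge0)
  powRM ?bump_scale_ge0 ?normr_ge0 // bump_scale_powR.
rewrite -mulr_sumr.
have Vn : 0 < tent_mass ^+ nwin by rewrite exprn_gt0 ?tent_mass_gt0.
have -> : nval%:R / tent_mass = (tent_mass * tent_mass ^+ nwin)^-1 * (nval%:R * tent_mass ^+ nwin).
  by field; rewrite !gt_eqF ?tent_mass_gt0.
rewrite ler_wpM2l ?invr_ge0 ?mulr_ge0 ?tent_mass_ge0 ?exprn_ge0 ?tent_mass_ge0 //.
by case: sm => [[e se]|[e se]]; [exact: sum_bump_t_move se|exact: sum_bump_a_move se].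
Qed.

Lemma lp_sum_nbump_move s : unit_move s ->
  (\esum_(w in [set: lamp]) (`|nbump w - nbump (lmul s w)| `^ p)%:E <= ((3 / L%:R) `^ p)%:E)%E.
Proof.
move=> sm; rewrite (esum_fin_supp (@lamp_of_cfg_inj L)) => [||w].
- by rewrite lee_fin sum_nbump_move.
- move=> w Fw; apply: cfg_range_lamp_of_cfg; apply: (@bump_move_cfg_range R _ _ _ sm).
  have [h1|h1] := eqVneq (bump w) 0; last by left => h; rewrite h eqxx in h1.
  right => h2; apply: Fw.
  by rewrite /nbump h1 h2 mulr0 subr0 normr0 powR0 ?gt_eqF.
- exact: powR_ge0.
Qed.

Lemma lp_sum_nbump : (\esum_(w in [set: lamp]) (`|nbump w| `^ p)%:E = 1)%E.
Proof.
rewrite (esum_fin_supp (@lamp_of_cfg_inj L)) => [||w].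
- under eq_bigr => b _ do rewrite ger0_norm ?mulr_ge0 ?bump_scale_ge0 ?bump_ge0 //.
  by rewrite sum_nbump_cfg.
- move=> w Fw; apply/cfg_range_lamp_of_cfg/core_cfg_range/(@bump_neq0_core R) => h.
  by apply: Fw; rewrite /nbump h mulr0 normr0 powR0 ?gt_eqF.
- exact: powR_ge0.
Qed.

End BumpMass.

Section Profile.
Context {R : realType} (L : nat) (p : R) (L0 : (0 < L)%N) (hp : 1 <= p).

Let p0 : 0 < p. Proof. exact: lt_le_trans hp. Qed.

Local Notation lp_sum u := (\esum_(z in [set: lamp]) (`|u z| `^ p)%:E)%E.

Definition xi (x z : lamp) : R := nbump L p (lmul (linv x) z).

Lemma lp_sum_xi_gen x s : lamp_gen s ->
  (lp_sum (fun z => xi x z - xi (lmul x s) z) <= ((3 / L%:R) `^ p)%:E)%E.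
Proof.
move=> gs; rewrite (esum_bij _ (lmul_bij x)).
under eq_esum => w _ do rewrite /xi lmulKV linvM -lmulA lmulKV.
exact: (lp_sum_nbump_move L0 hp (lamp_gen_unit_move (lamp_gen_linv gs))).
Qed.

(* Minkowski along the word, one generator at a time. *)
Lemma lp_sum_xi_word x w : gen_word w ->
  (lp_sum (fun z => xi x z - xi (foldl lmul x w) z)
    <= (((size w)%:R * (3 / L%:R)) `^ p)%:E)%E.
Proof.
set d := 3 / L%:R; have d0 : 0 < d by rewrite divr_gt0 ?ltr0n.
elim/last_ind: w => [_|w s IH /gen_word_rcons [gw gs]].
  by rewrite mul0r powR0 ?gt_eqF // esum1 // => z _; rewrite subrr normr0 powR0 ?gt_eqF.
rewrite foldl_rcons size_rcons; set y := foldl lmul x w.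
have [w0|wn0] := eqVneq (size w) 0%N.
  by rewrite /y (size0nil w0) mul1r; exact: lp_sum_xi_gen.
have := lp_sum_normD hp (mulr_gt0 _ d0) d0 (IH gw) (lp_sum_xi_gen y gs).
rewrite ltr0n lt0n wn0 -/y -[in X in _ -> X]natr1 mulrDl mul1r => /(_ isT) H.
have E z : xi x z - xi (lmul y s) z = xi x z - xi y z + (xi y z - xi (lmul y s) z).
  by rewrite addrA subrK.
by under eq_esum => z _ do rewrite E.
Qed.

Lemma lip_const_xi : (lip_const (@lamp_dist R) p xi <= (3 / L%:R)%:E)%E.
Proof.
apply: ge_ereal_sup => _ [x [y [_ ->]]].
have d0 : 0 < 3 / L%:R :> R by rewrite divr_gt0 ?ltr0n.
set N := lp_norm p _.
have NW w : gen_word w -> foldl lmul x w = y -> (N <= ((size w)%:R * (3 / L%:R))%:E)%E.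
  move=> gw xw; rewrite /N -xw; apply: (lp_norm_le hp); last exact: lp_sum_xi_word.
  by rewrite mulr_ge0 ?ler0n ?ltW.
have [w0 [gw0 xw0]] := gen_word_exists x y.
have Nfin : N \is a fin_num.
  by rewrite ge0_fin_numE ?poweR_ge0 // (le_lt_trans (NW w0 gw0 xw0)) ?ltry.
rewrite -(fineK Nfin) -EFinM lee_fin.
have n0 : 0 <= fine N by rewrite fine_ge0 ?poweR_ge0.
have Hn : fine N / (3 / L%:R) <= @lamp_dist R x y.
  apply: lb_le_inf; first by exists (size w0)%:R; exists w0.
  by move=> _ [w [gw xw] <-]; rewrite ler_pdivrMr // -lee_fin fineK // NW.
have [D0|Dn0] := eqVneq (@lamp_dist R x y) 0; first by rewrite D0 invr0 mulr0 ltW.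
have Dp : 0 < @lamp_dist R x y.
  by rewrite lt_neqAle eq_sym Dn0 (le_trans _ Hn) // divr_ge0 // ltW.
by rewrite ler_pdivrMr // mulrC -ler_pdivrMr.
Qed.

Lemma in_lp1_xi x : in_lp1 p (xi x).
Proof.
have E : lp_sum (xi x) = 1%E.
  rewrite (esum_bij _ (lmul_bij x)).
  by under eq_esum => w _ do rewrite /xi lmulKV; exact: lp_sum_nbump.
by split; rewrite /in_lp /lp_norm E ?ltry ?poweR1r.
Qed.

Lemma supp_radius_xi : (supp_radius (@lamp_dist R) xi <= (40 * L ^ 3)%N%:R%:E)%E.
Proof.
apply: ge_ereal_sup => _ [x [y [xy0 ->]]]; rewrite lee_fin.
set u := lmul (linv x) y.
have [H1 H2 H3] : core L u.
  by apply: (@bump_neq0_core R) => h; apply: xy0; rewrite /xi /nbump -/u h mulr0.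
have uf k : (4 * L < `|k|)%N -> lamp_f u k = 0.
  by move=> Hk; case: (eqVneq (lamp_f u k) 0) => [//|/eqP/H2]; lia.
have uB k : (`|lamp_f u k| <= L.*2)%N.
  case: (leqP `|k - lamp_n u| L.*2) => Hk; first by have := H3 k Hk; lia.
  by case: (eqVneq (lamp_f u k) 0) => [->//|/eqP/H2]; lia.
have -> : y = foldl lmul x (spell (4 * L)%N u) by rewrite foldl_lmul spellK // /u lmulK.
apply: le_trans (lamp_dist_le_size x (@gen_word_spell (4 * L)%N u)) _.
by rewrite ler_nat; apply: leq_trans (size_spell uB _) _; nia.
Qed.

Lemma lamp_profile_le (S : R) : (40 * L ^ 3)%N%:R <= S ->
  (lp_profile (@lamp_dist R) p S <= (3 / L%:R)%:E)%E.
Proof.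
move=> LS; apply: le_trans lip_const_xi; apply: ereal_inf_lbound.
exists xi => //; split; first exact: in_lp1_xi.
by apply: le_trans supp_radius_xi _; rewrite lee_fin.
Qed.

End Profile.

Lemma truncn_cbrt {R : realType} (t : R) : 1 <= t ->
  let L := Num.truncn (t `^ 3^-1) in
  [/\ (0 < L)%N, (L ^ 3)%N%:R <= t & t `^ 3^-1 <= 2 * L%:R].
Proof.
move=> t1 L; set c := t `^ 3^-1.
have c1 : 1 <= c by rewrite -(powRr0 t) ler_powR ?invr_ge0.
have c3 : c ^+ 3 = t.
  by rewrite -powR_mulrn ?powR_ge0 // -powRrM mulVf ?powRr1 ?pnatr_eq0 // (le_trans ler01).
have /andP[Lc cL] := truncn_itv (le_trans ler01 c1); rewrite -/L in Lc cL.
have L1 : (0 < L)%N by rewrite /L truncn_gt0.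
split => //.
  by rewrite natrX -c3 lerXn2r ?nnegrE ?ler0n ?(le_trans ler01 c1).
have : 1 <= L%:R :> R by rewrite ler1n.
by move: cL; rewrite -natr1; lra.
Qed.

Theorem corollary4p2p7 (R : realType) (p : R) (hp : 1 <= p) :
  exists C D : R, 0 < C /\ 0 < D /\
    exists t0 : R, forall t : R, t0 <= t ->
      (C%:E * lp_profile (@lamp_dist R) p (D * t) <= (ln t / t `^ (3^-1))%:E)%E.
Proof.
exists 6^-1, 40; do 2!split => //; exists (expR 1) => t Ht.
have t1 : 1 <= t by apply: le_trans Ht; rewrite -expR0 ler_expR.
have lnt : 1 <= ln t by rewrite -(expRK 1) ler_ln ?posrE ?expR_gt0 // (lt_le_trans ltr01).
have [L0 Lt cL] := truncn_cbrt t1; set L := Num.truncn _ in L0 Lt cL.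
have c0 : 0 < t `^ 3^-1 by rewrite powR_gt0 // (lt_le_trans ltr01).
apply: le_trans (lee_wpmul2l _ (lamp_profile_le L0 hp _)) _.
- by rewrite lee_fin invr_ge0.
- by rewrite natrM ler_wpM2l.
rewrite -EFinM lee_fin.
have -> : 6^-1 * (3 / L%:R) = (2 * L%:R)^-1 :> R by field; rewrite pnatr_eq0 -lt0n.
apply: le_trans (_ : (t `^ 3^-1)^-1 <= _).
  by rewrite lef_pV2 ?posrE // mulr_gt0 ?ltr0n.
by rewrite -[leLHS]mul1r ler_wpM2r // invr_ge0 ltW.
Qed.
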